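(* Let $m\ge1$, $K_1,\dots,K_m>0$, and $f_i(x)=\frac{K_i x}{K_i+x}$. For $\rho\in[0,1)$ let $(\mathbf{u}(\rho),\mu(\rho))$ be the unique steady state of the infinite-population foraging model, i.e. the unique solution with $u_i\ge0$, $\sum_iu_i=1$, $0<\mu<1$ of $$u_i=\Big((1-\rho)+\frac{\rho}{\mu}\Big)f_i(u_i)+\frac{1-\rho}{m}(1-\mu)\ (i=1,\dots,m),\qquad \mu=\sum_{i=1}^m f_i(u_i).$$ Then $$\lim_{\rho\to1}u_i(\rho)=\frac{K_i}{\sum_{j=1}^mK_j}\quad(i=1,\dots,m),\qquad \lim_{\rho\to1}\mu(\rho)=\frac{\sum_{j=1}^mK_j}{1+\sum_{j=1}^mK_j}.$$
   Context: The infinite-population foraging model is the map on the probability simplex in $\mathbb{R}^m$ given by $\mathbf{u}_{n+1}=\mathbf{f}(\mathbf{u}_n)+(1-\langle\mathbf{1},\mathbf{f}(\mathbf{u}_n)\rangle)\big(\frac{\rho}{\langle\mathbf{1},\mathbf{f}(\mathbf{u}_n)\rangle}\mathbf{f}(\mathbf{u}_n)+\frac{1-\rho}{m}\mathbf{1}\big)$, where $\mathbf{f}(\mathbf{u})=(f_1(u_1),\dots,f_m(u_m))^T$ and $\rho\in[0,1]$ is the recruitment probability; $K_i$ is the resource abundance at site $i$. For $\rho<1$ this map has a unique fixed point on the simplex, which is the steady state referred to. At $\rho=1$ the steady states are the points with $u_i=K_i/\sum_{j\in\mathcal I}K_j$ for $i\in\mathcal I$ and $u_i=0$ otherwise, for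 any nonempty $\mathcal I\subset\{1,\dots,m\}$. *)

From HB Require Import structures.
From mathcomp Require Import all_boot all_order all_algebra.
From mathcomp Require Import all_classical all_reals all_analysis.
Set Implicit Arguments. Unset Strict Implicit. Unset Printing Implicit Defensive.
Import Order.TTheory GRing.Theory Num.Theory.
Local Open Scope ring_scope.

Definition fK (R : realType) (m : nat) (K : 'I_m -> R) (i : 'I_m) (x : R) : R :=
  K i * x / (K i + x).

Definition steady_state (R : realType) (m : nat) (K : 'I_m -> R) (rho : R)
    (v : 'I_m -> R) (mu : R) : Prop :=
  [/\ forall i, 0 <= v i,
      \sum_(i < m) v i = 1,
      0 < mu /\ mu < 1,
      mu = \sum_(i < m) fK K i (v i)
    & forall i, v i = ((1 - rho) + rho / mu) * fK K i (v i)
                      + (1 - rho) / m%:R * (1 - mu)].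

From HB Require Import structures.
From mathcomp Require Import all_boot all_order all_algebra.
From mathcomp Require Import all_classical all_reals all_analysis.
From mathcomp Require Import ring lra.
Import Order.TTheory GRing.Theory Num.Theory.
Import numFieldNormedType.Exports.
Local Open Scope classical_set_scope.
Local Open Scope ring_scope.

(* Write t := rho (1 - mu) / mu, so that 1 - rho + rho / mu = 1 + t, and
   b := (1 - rho) (1 - mu) / m.  Clearing the denominator of f_i turns the
   i-th steady-state equation into v_i (v_i - K_i t - b) = b K_i, so the
   excess e_i := v_i - K_i t - b is positive and e_i rho <= (1 - rho) / m.
   Summing over i, sum_i e_i = 1 - S t - (1 - rho)(1 - mu) with S = sum_j K_j,
   hence |1 - S t| = O(1 - rho).  Therefore v_i = K_i t + O(1 - rho) tends to
   K_i / S, and mu = rho / (rho + t) tends to 1 / (1 + 1 / S). *)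

Lemma sumr_pos_gt0 {R : numDomainType} {I : finType} (i0 : I) (F : I -> R) :
  (forall i, 0 < F i) -> 0 < \sum_i F i.
Proof.
by move=> F_gt0; rewrite (bigD1 i0) //= ltr_wpDr ?F_gt0 // sumr_ge0 // => i _; exact/ltW.
Qed.

Lemma cvg_at_left_linear_bound {R : realType} (g : R -> R) {a d C L : R} :
  0 < d -> 0 < C ->
  (forall r, a - d < r -> r < a -> `|L - g r| <= C * (a - r)) ->
  g r @[r --> at_left a] --> L.
Proof.
move=> d_gt0 C_gt0 g_near; apply/cvgrPdist_le => e e_gt0.
near=> r.
have ar_small : a - r < e / C.
  by near: r; apply: nbhs_left_ltBl; rewrite divr_gt0.
apply: le_trans (g_near r _ _) _.
- by near: r; apply: nbhs_left_gt; rewrite gtrBl.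
- by near: r; exact: nbhs_left_lt.
by rewrite mulrC -ler_pdivlMr // ltW.
Unshelve. all: by end_near. Qed.

Section SteadyStateBounds.

Variables (R : realType) (m : nat) (K : 'I_m -> R) (rho mu : R) (v : 'I_m -> R).
Hypotheses (m_gt0 : (0 < m)%N) (K_gt0 : forall i, 0 < K i) (rho_lt1 : rho < 1).
Hypothesis (ss : steady_state K rho v mu).

Local Notation S := (\sum_(j < m) K j).
Local Notation t := (rho * (1 - mu) / mu).
Local Notation c := ((1 - rho) / m%:R).
Local Notation b := ((1 - rho) / m%:R * (1 - mu)).

Let mu_gt0 : 0 < mu. Proof. by case: ss => _ _ []. Qed.
Let mu_lt1 : mu < 1. Proof. by case: ss => _ _ []. Qed.

Let mu_neq0 : mu != 0. Proof. by rewrite gt_eqF. Qed.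

Let m_neq0 : m%:R != 0 :> R.
Proof. by rewrite pnatr_eq0 -lt0n. Qed.

Let S_gt0 : 0 < S.
Proof. by apply: (sumr_pos_gt0 (Ordinal m_gt0)). Qed.

Let c_gt0 : 0 < c.
Proof. by rewrite divr_gt0 ?ltr0n // subr_gt0. Qed.

Let b_gt0 : 0 < b.
Proof. by rewrite mulr_gt0 // subr_gt0. Qed.

Lemma steady_state_excess_eq i : v i * (v i - K i * t - b) = b * K i.
Proof.
case: ss => v_ge0 _ _ _ /(_ i); rewrite /fK => v_eq.
have Kv_neq0 : K i + v i != 0 by rewrite gt_eqF // ltr_wpDr ?K_gt0.
set rhs := (X in v i = X) in v_eq.
have : (v i - rhs) * (K i + v i) = 0 by rewrite -v_eq subrr mul0r.
rewrite /rhs => cleared; apply/eqP; rewrite -subr_eq0 -cleared; apply/eqP.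
by field; rewrite m_neq0 Kv_neq0 mu_neq0.
Qed.

Lemma steady_state_excess_gt0 i : 0 < v i - K i * t - b.
Proof.
have ve_gt0 : 0 < v i * (v i - K i * t - b).
  by rewrite steady_state_excess_eq mulr_gt0.
have v_gt0 : 0 < v i.
  case: ss => /(_ i) v_ge0 _ _ _ _; rewrite lt_def v_ge0 andbT.
  by apply: contraTneq ve_gt0 => ->; rewrite mul0r ltxx.
by rewrite -(pmulr_rgt0 _ v_gt0).
Qed.

Lemma steady_state_excess_le i : (v i - K i * t - b) * rho <= c.
Proof.
set e := v i - K i * t - b.
have e_gt0 : 0 < e := steady_state_excess_gt0 i.
have ev : v i * e = b * K i := steady_state_excess_eq i.
have et_le : e * t <= b.
  rewrite -(ler_pM2r (K_gt0 i)) -ev (mulrC (v i)) -(mulrA e) ler_pM2l //.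
  have -> : v i = e + b + K i * t by rewrite /e; ring.
  by rewrite mulrC lerDr ltW // addr_gt0.
have t_mu : t * mu = rho * (1 - mu) by field.
have : e * rho * (1 - mu) <= c * mu * (1 - mu).
  by rewrite -mulrA -t_mu mulrA -(mulrAC c) ler_pM2r.
rewrite ler_pM2r ?subr_gt0 // => /le_trans; apply.
by rewrite ler_piMr // ltW.
Qed.

Lemma steady_state_sum_excess :
  \sum_(i < m) (v i - K i * t - b) = 1 - S * t - (1 - rho) * (1 - mu).
Proof.
case: ss => _ v_sum _ _ _.
rewrite !sumrB v_sum -mulr_suml sumr_const card_ord -mulr_natl.
by field; rewrite mu_neq0 m_neq0.
Qed.

Hypothesis rho_gt_half : 1/2 < rho.

Lemma steady_state_sum_K_t_bounds : 0 <= 1 - S * t <= 3 * (1 - rho).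
Proof.
have sum_ge0 : 0 <= \sum_(i < m) (v i - K i * t - b).
  by apply: sumr_ge0 => i _; exact/ltW/steady_state_excess_gt0.
have sum_le : (\sum_(i < m) (v i - K i * t - b)) * rho <= 1 - rho.
  rewrite mulr_suml; apply: le_trans (ler_sum _ (fun i _ => steady_state_excess_le i)) _.
  by rewrite sumr_const card_ord -(mulr_natr c) divfK.
rewrite steady_state_sum_excess in sum_ge0 sum_le.
set X : R := 1 - S * t - _ in sum_ge0 sum_le.
have -> : 1 - S * t = X + (1 - rho) * (1 - mu) by rewrite /X; ring.
have rm_ge0 : 0 <= (1 - rho) * (1 - mu) by rewrite mulr_ge0 // subr_ge0 ltW.
have rm_le : (1 - rho) * (1 - mu) <= 1 - rho.
  by rewrite ger_pMr ?subr_gt0 // lerBlDr lerDl ltW.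
have X_le : X <= 2 * (1 - rho) by have := rho_gt_half; nra.
by apply/andP; split; lra.
Qed.

Lemma steady_state_dist_u i :
  `|K i / S - v i| <= (3 * (K i / S) + 3) * (1 - rho).
Proof.
have /andP[St_ge0 St_le] := steady_state_sum_K_t_bounds.
have q_ge0 : 0 <= K i / S by rewrite divr_ge0 // ltW.
have c_le : c <= 1 - rho.
  by rewrite ler_pdivrMr ?ltr0n // ler_peMr ?ler1n // subr_ge0 ltW.
have b_le : b <= 1 - rho.
  by apply: le_trans c_le; rewrite ger_pMr // gerBl ltW.
have e_gt0 := steady_state_excess_gt0 i.
have e_le : v i - K i * t - b <= 2 * (1 - rho).
  by have := steady_state_excess_le i; have := rho_gt_half; nra.
have qD_ge0 : 0 <= K i / S * (1 - S * t) by rewrite mulr_ge0.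
have qD_le : K i / S * (1 - S * t) <= K i / S * (3 * (1 - rho)).
  by rewrite ler_wpM2l.
have -> : K i / S - v i = K i / S * (1 - S * t) - b - (v i - K i * t - b).
  by field; rewrite m_neq0 mu_neq0 gt_eqF.
have q_rho_ge0 : 0 <= K i / S * (1 - rho) by rewrite mulr_ge0 // subr_ge0 ltW.
have := rho_lt1; have := b_gt0.
by rewrite ler_norml => *; apply/andP; split; lra.
Qed.

Lemma steady_state_dist_mu : `|S / (1 + S) - mu| <= 4 * (1 - rho).
Proof.
have /andP[St_ge0 St_le] := steady_state_sum_K_t_bounds.
have rho_gt0 : 0 < rho by have := rho_gt_half; lra.
have t_gt0 : 0 < t by rewrite divr_gt0 // mulr_gt0 // subr_gt0.
have denom_ge : 1 / 2 <= (1 + S) * (rho + t).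
  by have := rho_gt_half; have := S_gt0; nra.
have denom_gt0 : 0 < (1 + S) * (rho + t) by apply: lt_le_trans denom_ge; lra.
have num_le : `|S * t - rho| <= 2 * (1 - rho).
  by have := rho_lt1; rewrite ler_norml => ?; apply/andP; split; lra.
have -> : S / (1 + S) - mu = (S * t - rho) / ((1 + S) * (rho + t)).
  by field; rewrite mu_neq0 -mulrDr addrCA subrr addr0 mulr1 !gt_eqF // addr_gt0.
rewrite normrM normfV (gtr0_norm denom_gt0) ler_pdivrMr //.
by apply: le_trans num_le _; have := rho_lt1; nra.
Qed.

End SteadyStateBounds.

Theorem mainTheorem2 (R : realType) (m : nat) (K : 'I_m -> R)
    (u : R -> 'I_m -> R) (mu : R -> R) :
  (0 < m)%N ->
  (forall i, 0 < K i) ->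
  (forall rho, 0 <= rho -> rho < 1 -> steady_state K rho (u rho) (mu rho)) ->
  (forall i, u rho i @[rho --> at_left (1:R)] --> (K i / \sum_(j < m) K j : R)) /\
  (mu rho @[rho --> at_left (1:R)] -->
     ((\sum_(j < m) K j) / (1 + \sum_(j < m) K j) : R)).
Proof.
move=> m_gt0 K_gt0 ss.
have ss_near rho : 1 - 1 / 2 < rho -> rho < 1 -> steady_state K rho (u rho) (mu rho).
  by move=> rho_gt rho_lt1; apply: ss => //; lra.
have half_gt0 : 0 < 1 / 2 :> R by lra.
split=> [i|].
- have S_gt0 : 0 < \sum_(j < m) K j by apply: (sumr_pos_gt0 (Ordinal m_gt0)).
  have q_ge0 : 0 <= K i / \sum_(j < m) K j by rewrite divr_ge0 // ltW.
  apply: (cvg_at_left_linear_bound (fun rho => u rho i)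
            (C := 3 * (K i / \sum_(j < m) K j) + 3) half_gt0) => [|rho rho_gt rho_lt1].
    lra.
  by apply: steady_state_dist_u => //; [exact: ss_near | lra].
- apply: (cvg_at_left_linear_bound mu (C := 4) half_gt0) => [|rho rho_gt rho_lt1].
    lra.
  by apply: steady_state_dist_mu => //; [exact: ss_near | lra].
Qed.
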